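(* Let $n$, $k$ and $r$ be positive integers. Then $$V_k(n) \;=\; \sum_{i=0}^{r-1} Q_{rk}(n+ik) \;=\; Q_{rk}(n)+Q_{rk}(n+k)+\cdots+Q_{rk}(n+(r-1)k).$$
   Context: A partition of a positive integer $m$ is a non-increasing sequence of positive integers (its parts) summing to $m$. For positive integers $j,m$, $Q_j(m)$ denotes the total number of occurrences of the part $j$ among all partitions of $m$ (a partition in which $j$ appears $t$ times contributes $t$). $V_k(m)$ denotes the sum, over all partitions of $m$, of the number of distinct part sizes that occur $k$ or more times in that partition. *)

From mathcomp Require Import all_boot.
Set Implicit Arguments. Unset Strict Implicit. Unset Printing Implicit Defensive.

Definition is_partition (m : nat) (s : seq nat) : bool :=
  [&& sorted geq s, all (fun x => 0 < x) s & sumn s == m].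

Fixpoint seqs_len (b l : nat) : seq (seq nat) :=
  if l is l'.+1 then
    [seq x :: t | x <- iota 1 b, t <- seqs_len b l']
  else [:: [::]].

(* The list of all partitions of m (each exactly once): every partition of m
   has length <= m and parts in {1..m}, so it appears among the candidates. *)
Definition partitions (m : nat) : seq (seq nat) :=
  undup [seq s <- flatten [seq seqs_len m l | l <- iota 0 m.+1] | is_partition m s].

Definition Q (j m : nat) : nat := \sum_(s <- partitions m) count_mem j s.

Definition V (k m : nat) : nat :=
  \sum_(s <- partitions m) size [seq j <- undup s | k <= count_mem j s].

From mathcomp Require Import all_boot zify.
Set Implicit Arguments. Unset Strict Implicit.

(* Write p(m) for the number of partitions of m, with p(m) = 0 for m < 0.
   Adding t copies of j to a partition of m - t j is a bijection onto the
   partitions of m in which j occurs at least t times, so there are p(m - t j)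
   of them.  Summing over t >= 1 gives Q_j(m) = sum_t p(m - t j), and summing
   over j >= 1 gives V_k(m) = sum_j p(m - j k).  Hence
   sum_(i<r) Q_(rk)(n + i k) = sum_(t>=1, i<r) p(n - (t r - i) k), and as
   (t, i) ranges over [1, oo) x [0, r) the index t r - i ranges exactly once
   over the positive integers. *)

Lemma mem_seqs_len b l s :
  (s \in seqs_len b l) = (size s == l) && all (fun x => 0 < x <= b) s.
Proof.
elim: l s => [|l IH] [|x s] //=.
- by apply/negbTE/allpairsP; case=> [[y t]] /= [_ _].
- apply/allpairsP/idP.
  + case=> [[y t]] /= [Hy Ht [-> ->]].
    move: Ht; rewrite IH => /andP[/eqP-> ->]; move: Hy; rewrite mem_iota eqxx /=; lia.
  + move=> /andP[Hs /andP[Hx Ha]]; exists (x, s) => /=; split=> //.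
    * by rewrite mem_iota; lia.
    * by rewrite IH -(eqSS (size s)) Hs Ha.
Qed.

Lemma leq_mem_sumn x s : x \in s -> x <= sumn s.
Proof. by elim: s => //= y s IH; rewrite in_cons => /orP[/eqP->|/IH]; lia. Qed.

Lemma size_le_sumn s : all (fun x => 0 < x) s -> size s <= sumn s.
Proof. by elim: s => //= y s IH /andP[Hy /IH]; lia. Qed.

Lemma count_mem_mul_le_sumn j s : count_mem j s * j <= sumn s.
Proof. by elim: s => //= y s IH; case: eqP => [->|_]; lia. Qed.

Lemma mem_partitions m s : (s \in partitions m) = is_partition m s.
Proof.
rewrite /partitions mem_undup mem_filter andbC.
case Hs: (is_partition m s); rewrite ?andbF // andbT.
move: Hs => /and3P[_ Hpos /eqP <-].
apply/flatten_mapP; exists (size s).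
  by rewrite mem_iota add0n ltnS size_le_sumn.
rewrite mem_seqs_len eqxx /=; apply/allP => x Hx.
by rewrite (allP Hpos x Hx) leq_mem_sumn.
Qed.

Fact geq_trans : transitive geq. Proof. exact: rev_trans leq_trans. Qed.
Fact geq_total : total geq. Proof. by move=> a b; apply: leq_total. Qed.
Fact geq_anti : antisymmetric geq. Proof. by move=> a b /anti_leq. Qed.

Lemma perm_nseq_iter_rem (T : eqType) (j : T) t s : t <= count_mem j s ->
  perm_eq s (nseq t j ++ iter t (rem j) s).
Proof.
elim: t s => [|t IH] s Hc; first exact: perm_refl.
have Hj : j \in s by rewrite -has_pred1 has_count; lia.
have Hs := perm_to_rem Hj.
rewrite iterSr; apply: (perm_trans Hs); rewrite /= perm_cons; apply: IH.
by move: Hc; rewrite (permP Hs) /= eqxx; lia.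
Qed.

Lemma subseq_iter_rem (T : eqType) (j : T) t s : subseq (iter t (rem j) s) s.
Proof.
elim: t => [|t IH] /=; first exact: subseq_refl.
exact: subseq_trans (rem_subseq _ _) IH.
Qed.

Section AddParts.

Variables j t : nat.
Hypothesis j_gt0 : 0 < j.

Definition add_parts (s : seq nat) : seq nat := sort geq (nseq t j ++ s).

Lemma perm_add_parts s : perm_eq (add_parts s) (nseq t j ++ s).
Proof. by rewrite perm_sort. Qed.

Lemma add_parts_partition m s : is_partition m s ->
  is_partition (m + t * j) (add_parts s) && (t <= count_mem j (add_parts s)).
Proof.
move=> /and3P[_ Hpos /eqP Hm]; have Hp := perm_add_parts s.
rewrite /is_partition (sort_sorted geq_total) (perm_all _ Hp) all_cat Hpos.
rewrite (perm_sumn Hp) sumn_cat sumn_nseq Hm (permP Hp) count_cat count_nseq.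
rewrite /= eqxx mul1n leq_addr !andbT mulnC addnC eqxx andbT.
by apply/allP => y /nseqP[-> _].
Qed.

Lemma add_parts_inj m1 m2 s1 s2 :
  is_partition m1 s1 -> is_partition m2 s2 -> add_parts s1 = add_parts s2 -> s1 = s2.
Proof.
move=> /and3P[S1 _ _] /and3P[S2 _ _] /(perm_sortP geq_total geq_trans geq_anti).
by rewrite perm_cat2l; exact: (sorted_eq geq_trans geq_anti S1 S2).
Qed.

Lemma add_parts_surj m x : is_partition m x -> t <= count_mem j x ->
  exists2 s, is_partition (m - t * j) s & x = add_parts s.
Proof.
move=> /and3P[Sx Px /eqP Mx] Hc.
have Hp := perm_nseq_iter_rem Hc; have Hsub := subseq_iter_rem j t x.
exists (iter t (rem j) x).
  rewrite /is_partition (subseq_sorted geq_trans Hsub Sx).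
  rewrite -Mx (perm_sumn Hp) sumn_cat sumn_nseq mulnC addKn eqxx andbT /=.
  by apply/allP => y /(mem_subseq Hsub); apply/allP.
apply: (sorted_eq geq_trans geq_anti Sx (sort_sorted geq_total _)).
by rewrite perm_sym perm_sort perm_sym.
Qed.

End AddParts.

(* p(m - d), with the convention that p is 0 on negative arguments
   (the subtraction on nat is truncated). *)
Definition npart_sub (m d : nat) : nat :=
  if d <= m then size (partitions (m - d)) else 0.

Lemma npart_sub_addn m a d : a <= d -> npart_sub (m + a) d = npart_sub m (d - a).
Proof.
move=> le_ad; rewrite /npart_sub.
have -> : (d <= m + a) = (d - a <= m) by lia.
by case: ifP => // _; congr (size (partitions _)); lia.
Qed.

Lemma count_mult_ge_partitions m j t : 0 < j ->
  count (fun s => t <= count_mem j s) (partitions m) = npart_sub m (t * j).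
Proof.
move=> j_gt0; rewrite /npart_sub; case: leqP => Htj; last first.
  apply/eqP; rewrite eqn0Ngt -has_count; apply/hasPn => s.
  rewrite mem_partitions => /and3P[_ _ /eqP Hm]; apply/negP => Hc.
  have := count_mem_mul_le_sumn j s; rewrite Hm.
  have : t * j <= count_mem j s * j by rewrite leq_mul2r Hc orbT.
  lia.
rewrite -size_filter -(size_map (add_parts j t)); apply/perm_size/uniq_perm.
- by rewrite filter_uniq ?undup_uniq.
- rewrite map_inj_in_uniq ?undup_uniq // => s1 s2.
  by rewrite !mem_partitions; apply: add_parts_inj.
move=> x; rewrite mem_filter mem_partitions; apply/andP/mapP.
- case=> Hc Hx; have [s Hs ->] := add_parts_surj Hx Hc.
  by exists s; rewrite ?mem_partitions.
- case=> s; rewrite mem_partitions => /(add_parts_partition t j_gt0).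
  by rewrite subnK // => /andP[Hx Hc] ->.
Qed.

Lemma sum_count_nat (T : Type) (a : pred T) (s : seq T) :
  \sum_(x <- s) (a x : nat) = count a s.
Proof. by elim: s => [|x s IH]; rewrite ?big_nil ?big_cons ?IH. Qed.

Lemma sum_leq_minn c B : \sum_(1 <= t < B.+1) (t <= c : nat) = minn c B.
Proof.
elim: B => [|B IH]; first by rewrite big_geq // minn0.
by rewrite big_nat_recr //= IH; case: (leqP B.+1 c) => /=; lia.
Qed.

Lemma Q_sum_npart j m B : 0 < j -> m <= B ->
  Q j m = \sum_(1 <= t < B.+1) npart_sub m (t * j).
Proof.
move=> j_gt0 le_mB.
under eq_bigr do rewrite -count_mult_ge_partitions // -sum_count_nat.
rewrite exchange_big /Q; apply: eq_big_seq => s.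
rewrite mem_partitions => /and3P[_ _ /eqP Hm].
rewrite sum_leq_minn; apply/esym/minn_idPl.
have := count_mem_mul_le_sumn j s; rewrite Hm.
have : count_mem j s <= count_mem j s * j by rewrite leq_pmulr.
lia.
Qed.

Lemma V_sum_npart k m B : 0 < k -> m <= B ->
  V k m = \sum_(1 <= j < B.+1) npart_sub m (k * j).
Proof.
move=> k_gt0 le_mB.
transitivity (\sum_(1 <= j < B.+1) count (fun s => k <= count_mem j s) (partitions m)).
  2: by apply: eq_big_nat => j /andP[j_gt0 _]; rewrite count_mult_ge_partitions.
under eq_bigr do rewrite -sum_count_nat.
rewrite exchange_big /V; apply: eq_big_seq => s.
rewrite mem_partitions => /and3P[_ Hpos /eqP Hm].
rewrite sum_count_nat -size_filter; apply/perm_size/uniq_perm.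
- by rewrite filter_uniq ?undup_uniq.
- by rewrite filter_uniq ?iota_uniq.
move=> j; rewrite !mem_filter mem_undup mem_iota.
case Hc: (k <= count_mem j s) => //=.
have Hj : j \in s by rewrite -has_pred1 has_count (leq_trans k_gt0 Hc).
by rewrite Hj (allP Hpos j Hj) add1n subn1 ltnS (leq_trans _ le_mB) // -Hm leq_mem_sumn.
Qed.

Lemma big_nat_blocks (R : Type) (idx : R) (op : Monoid.com_law idx)
    (F : nat -> R) r T :
  \big[op/idx]_(1 <= t < T.+1) \big[op/idx]_(0 <= i < r) F (t * r - i) =
  \big[op/idx]_(1 <= j < (r * T).+1) F j.
Proof.
elim: T => [|T IH]; first by rewrite muln0 !big_geq.
rewrite big_nat_recr //= IH (@big_cat_nat _ _ _ (r * T).+1 _ (r * T.+1).+1) //=.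
  congr (op _ _); rewrite -{1}(add0n (r * T).+1) big_addn subSS mulnS addnK.
  by rewrite [RHS]big_nat_rev; apply: eq_big_nat => i /andP[_ lt_ir]; congr F; lia.
by rewrite ltnS leq_mul2l leqnSn orbT.
Qed.

Theorem theorem2 (n k r : nat) (hn : 0 < n) (hk : 0 < k) (hr : 0 < r) :
  V k n = \sum_(0 <= i < r) Q (r * k) (n + i * k).
Proof.
pose T := n + r * k.
have rk_gt0 : 0 < r * k by rewrite muln_gt0 hr.
rewrite (V_sum_npart (B := r * T)) //; last by nia.
rewrite -(big_nat_blocks _ (fun j => npart_sub n (k * j))) exchange_big /=.
apply: eq_big_nat => i /andP[_ lt_ir].
rewrite (Q_sum_npart (B := T)) //; last by nia.
apply: eq_big_nat => t /andP[t_gt0 _].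
have le_ik : i * k <= t * (r * k) by nia.
by rewrite npart_sub_addn // mulnA mulnC mulnBl.
Qed.
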